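(* Let $A\in\mathbb{C}^{m\times n}$ ($m\ge 2$), $\alpha_0,\beta_0\in(0,\tfrac{\pi}{2})$, and suppose row $i_0$ of $A$ is weakly dominated by row $i_1$ of $A$ ($i_1\ne i_0$), i.e. $\mathrm{Re}((e^{i_0})^*Ad^j)\le\mathrm{Re}((e^{i_1})^*Ad^j)$ for all $j\in\mathcal J$, with strict inequality for at least one $j_0\in\mathcal J$. Let $A'\in\mathbb{C}^{(m-1)\times n}$ be obtained from $A$ by deleting row $i_0$. Suppose $(z^0,w^0)$, with $z^0=(z^0_1,\dots,z^0_{i_0-1},z^0_{i_0+1},\dots,z^0_m)\in S^{m-1}_{\alpha_0}$ and $w^0\in S^n_{\beta_0}$, is a complex Nash equilibrium of $G_{\mathcal C}(A')$, and suppose the condition of elimination $$\mathrm{Im}((e^{i_0})^*Aw^0)=\mathrm{Im}((e^{i_1})^*Aw^0)$$ holds. Then, with $z'^0=(z^0_1,\dots,z^0_{i_0-1},0,z^0_{i_0+1},\dots,z^0_m)\in S^m_{\alpha_0}$, the pair $(z'^0,w^0)$ is a complex Nash equilibrium of $G_{\mathcal C}(A)$ and $v_{A'}=v_A$.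
   Context: For $\gamma\in(0,\tfrac{\pi}{2})$ and $p\ge 1$ let $S^p_\gamma=\{z\in\mathbb{C}^p:\ \text{for each }k,\ z_k=0\text{ or }|\arg z_k|\le\gamma,\ \sum_{k=1}^p z_k=1\}$ ($\arg$ the principal argument in $(-\pi,\pi]$). Its extreme points are $d^1,\dots,d^{p^2}$, where $d^k=e^k$ (standard basis vector) for $k\le p$, and $d^{p+1},\dots,d^{p^2}$ are the $p(p-1)$ vectors having exactly two nonzero coordinates, one equal to $\tfrac12+bi$ and another equal to $\tfrac12-bi$, with $b=\tfrac12\tan\gamma$. The two-player zero-sum complex game $G_{\mathcal C}(A)$, for $A\in\mathbb{C}^{m\times n}$ and strategy arguments $\alpha_0,\beta_0$: player I chooses $z\in S^m_{\alpha_0}$, player II chooses $w\in S^n_{\beta_0}$, player I receives $\mathrm{Re}(z^*Aw)$ and player II receives $-\mathrm{Re}(z^*Aw)$ ($z^*$ the conjugate transpose); $G_{\mathcal C}(A')$ is defined the same way with $S^{m-1}_{\alpha_0}$ for player I. Here $d^j$, $j\in\mathcal J=\{1,\dots,n^2\}$, are the extreme points of $S^n_{\beta_0}$ and $e^i$ the standard basis vectors of $\mathbb{C}^m$. A pair $(z^0,w^0)$ is a complex Nash equilibrium if $\mathrm{Re}(z^*Aw^0)\le\mathrm{Re}((z^0)^*Aw^0)\le\mathrm{Re}((z^0)^*Aw)$ for all strategies $z$ of player I and $w$ of player II; the value of the game is $v_A=\mathrm{Re}((z^0)^*Aw^0)$ for a Nash equilibrium $(z^0,w^0)$. *)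

From mathcomp Require Import all_boot all_order all_algebra.
From mathcomp Require Import reals trigo.
From mathcomp Require Export complex.
Set Implicit Arguments. Unset Strict Implicit. Unset Printing Implicit Defensive.
Import Order.TTheory GRing.Theory Num.Theory.
Local Open Scope ring_scope.
Local Open Scope complex_scope.

Section ComplexGame.
Variable R : realType.

Definition modc (z : R[i]) : R := Num.sqrt (complex.Re z ^+ 2 + complex.Im z ^+ 2).

Definition parg_abs_le (z : R[i]) (g : R) : Prop :=
  exists th : R, [/\ - pi < th, th <= pi, `|th| <= g &
    z = (modc z * cos th) +i* (modc z * sin th)].

Definition strat (p : nat) (g : R) (z : 'cV[R[i]]_p) : Prop :=
  (forall k : 'I_p, z k 0 = 0 \/ parg_abs_le (z k 0) g) /\
  \sum_(k < p) z k 0 = 1.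

Definition ebasis (p : nat) (k : 'I_p) : 'cV[R[i]]_p := delta_mx k 0.

(* the extreme points d^1..d^{p^2} of S^p_gamma, b = tan(gamma)/2 *)
Definition extreme_pt (p : nat) (g : R) (d : 'cV[R[i]]_p) : Prop :=
  (exists k : 'I_p, d = ebasis k) \/
  (exists k l : 'I_p, k != l /\
     d = ((1/2) +i* (tan g / 2)) *: ebasis k + ((1/2) -i* (tan g / 2)) *: ebasis l).

Definition ctr (p q : nat) (M : 'M[R[i]]_(p, q)) : 'M[R[i]]_(q, p) :=
  (map_mx Num.conj M)^T.

Definition bil (m n : nat) (A : 'M[R[i]]_(m, n)) (z : 'cV[R[i]]_m) (w : 'cV[R[i]]_n) : R[i] :=
  (ctr z *m A *m w) 0 0.

Definition payoff (m n : nat) (A : 'M[R[i]]_(m, n)) z w : R := complex.Re (bil A z w).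

Definition complex_NE (m n : nat) (a0 b0 : R) (A : 'M[R[i]]_(m, n))
    (z0 : 'cV[R[i]]_m) (w0 : 'cV[R[i]]_n) : Prop :=
  [/\ strat a0 z0, strat b0 w0,
      (forall z, strat a0 z -> payoff A z w0 <= payoff A z0 w0) &
      (forall w, strat b0 w -> payoff A z0 w0 <= payoff A z0 w)].

Definition ins0 (m : nat) (i0 : 'I_m.+1) (z : 'cV[R[i]]_m) : 'cV[R[i]]_m.+1 :=
  \col_(i < m.+1) (match unlift i0 i with Some k => z k 0 | None => 0 end).

End ComplexGame.

Arguments parg_abs_le {R}.
Arguments modc {R}.
Arguments strat {R p}.
Arguments ebasis {R p}.
Arguments extreme_pt {R p}.
Arguments ctr {R p q}.
Arguments bil {R m n}.
Arguments payoff {R m n}.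
Arguments complex_NE {R m n}.
Arguments ins0 {R m}.

(** Player II keeps [w0]; the only issue is player I's best response in the larger game.
    Both players' payoffs are real parts of linear functionals, so by a one-dimensional
    Helly argument it suffices to test player I's deviations at the extreme points
    [e^k] and [(1/2 + bi) e^k + (1/2 - bi) e^l].  Under the condition of elimination,
    rows [i0] and [i1] of [A w0] have the same imaginary part and (by the dominance,
    again tested at extreme points) [Re (A w0)_i0 <= Re (A w0)_i1], so moving the weight
    of row [i0] onto row [i1] never lowers player I's payoff.  This maps every extreme
    point to a strategy that avoids row [i0], i.e. to a strategy of the game on [A']. *)

From mathcomp Require Import all_boot all_order all_algebra.
From mathcomp Require Import reals trigo.
From mathcomp Require Import complex.
From mathcomp Require Import ring lra.
Import Order.TTheory GRing.Theory Num.Theory.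
Local Open Scope ring_scope.
Local Notation cRe := complex.Re.
Local Notation cIm := complex.Im.

Set Implicit Arguments.
Unset Strict Implicit.
Unset Printing Implicit Defensive.

Section ComplexGameTheory.
Variable R : realType.

Lemma ReM (x y : R[i]) : cRe (x * y) = cRe x * cRe y - cIm x * cIm y.
Proof. by case: x y => a b [c d]. Qed.

Lemma Re_conjMC (z u : R[i]) : cRe (z^* * u) = cRe (u^* * z).
Proof. case: z u => a b [c d] /=; rewrite !mulNr !opprK; ring. Qed.

Lemma pairwise_center (p : nat) (b : R) (a t : 'I_p -> R) : 0 < b ->
  (forall k, a k <= 0) ->
  (forall k l, k != l -> (a k + a l) / 2 + b * (t k - t l) <= 0) ->
  exists c, forall k, 2 * b * `|t k - c| <= - a k.
Proof.
move=> b_gt0 a_le0 a_pair; case: p a t a_le0 a_pair => [|q] a t a_le0 a_pair.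
  by exists 0; case.
(* The intervals [t k -+ a k / 2b] meet pairwise, so the largest left end lies in all. *)
have [ks _ ks_max] := @arg_maxP _ _ _ ord0 xpredT (fun k => 2 * b * t k + a k) isT.
exists (t ks + a ks / (2 * b)) => k.
have bc : 2 * b * (t ks + a ks / (2 * b)) = 2 * b * t ks + a ks.
  by rewrite mulrDr mulrCA divff ?mulr1 // mulf_neq0 ?pnatr_eq0 ?gt_eqF.
have above : 2 * b * (t k - (t ks + a ks / (2 * b))) <= - a k.
  by rewrite mulrBr bc; have := ks_max k isT => /= ?; lra.
have below : 2 * b * ((t ks + a ks / (2 * b)) - t k) <= - a k.
  rewrite mulrBr bc; case: (eqVneq ks k) => [<-|ks_k]; first by have := a_le0 ks; lra.
  by have := a_pair _ _ ks_k; lra.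
case: (lerP 0 (t k - (t ks + a ks / (2 * b)))) => sgn; first by rewrite ger0_norm.
by rewrite ltr0_norm // mulrN -mulrN opprB.
Qed.

Lemma pairwise_sum_le0 (p : nat) (b : R) (a t r s : 'I_p -> R) : 0 < b ->
  (forall k, a k <= 0) ->
  (forall k l, k != l -> (a k + a l) / 2 + b * (t k - t l) <= 0) ->
  (forall k, `|s k| <= 2 * b * r k) -> \sum_k s k = 0 ->
  \sum_k (r k * a k - s k * t k) <= 0.
Proof.
move=> b_gt0 a_le0 a_pair s_le s_sum0.
have [c c_center] := pairwise_center b_gt0 a_le0 a_pair.
have b2_gt0 : 0 < 2 * b by lra.
have -> : \sum_k (r k * a k - s k * t k) = \sum_k (r k * a k - s k * (t k - c)).
  rewrite (eq_bigr (fun k => r k * a k - s k * (t k - c) - s k * c)) => [|k _]; last by ring.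
  by rewrite big_split /= sumrN -mulr_suml s_sum0 mul0r oppr0 addr0.
apply: sumr_le0 => k _.
have : `|s k * (t k - c)| <= - (r k * a k).
  rewrite normrM -(ler_pM2l b2_gt0).
  rewrite mulrCA; apply: le_trans (ler_wpM2l (normr_ge0 _) (c_center k)) _.
  by have := s_le k; have := a_le0 k; have := normr_ge0 (s k); nra.
have := ler_norm (- (s k * (t k - c))); rewrite normrN; lra.
Qed.

Definition cplus (g : R) : R[i] := ((1 / 2) +i* (tan g / 2))%C.
Definition cminus (g : R) : R[i] := ((1 / 2) -i* (tan g / 2))%C.
Definition pair_pt p (g : R) (k l : 'I_p) : 'cV[R[i]]_p :=
  cplus g *: ebasis k + cminus g *: ebasis l.

Lemma ebasisE p (k j : 'I_p) : @ebasis R p k j 0 = (j == k)%:R.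
Proof. by rewrite /ebasis mxE eqxx andbT. Qed.

Lemma sum_mul_ebasis p (f : 'I_p -> R[i]) k : \sum_j f j * ebasis k j 0 = f k.
Proof.
rewrite (bigD1 k) //= ebasisE eqxx mulr1 big1 ?addr0 // => j jk.
by rewrite ebasisE (negbTE jk) mulr0.
Qed.

Lemma sum_mul_pair_pt p (g : R) (f : 'I_p -> R[i]) k l :
  \sum_j f j * pair_pt g k l j 0 = f k * cplus g + f l * cminus g.
Proof.
have -> : \sum_j f j * pair_pt g k l j 0 =
    \sum_j (f j * cplus g) * ebasis k j 0 + \sum_j (f j * cminus g) * ebasis l j 0.
  by rewrite -big_split; apply: eq_bigr => j _ /=; rewrite !mxE; ring.
by rewrite !sum_mul_ebasis.
Qed.

Lemma cplus_cminus (g : R) : cplus g + cminus g = 1.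
Proof. by apply/eqP; rewrite eq_complex /= subrr eqxx andbT; apply/eqP; lra. Qed.

Section StrategyCone.
Variable g : R.
Hypothesis g_bounds : 0 < g < pi / 2.

Lemma cosg_gt0 : 0 < cos g.
Proof.
by case/andP: g_bounds => g0 gpi; apply: cos_gt0_pihalf; rewrite gpi andbT;
  have := pi_gt0 R; lra.
Qed.

Lemma tang_gt0 : 0 < tan g.
Proof.
case/andP: g_bounds => g0 gpi; rewrite /tan divr_gt0 ?cosg_gt0 //.
by apply: sin_gt0_pihalf; rewrite g0.
Qed.

Lemma sin_abs_le (th : R) : `|th| <= g -> `|sin th| <= tan g * cos th.
Proof.
move=> th_le; have pi0 := pi_gt0 R; case/andP: g_bounds => g0 gpi.
have sin_norm : sin `|th| = `|sin th|.
  case: (lerP 0 th) => th0.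
    rewrite ger0_norm // ger0_norm // sin_ge0_pi //.
    by rewrite ger0_norm // in th_le; lra.
  rewrite ltr0_norm // sinN ler0_norm // -[th]opprK sinN oppr_le0 sin_ge0_pi //.
  by rewrite ltr0_norm // in th_le; lra.
have : 0 <= sin (g - `|th|) by apply: sin_ge0_pi; have := normr_ge0 th; lra.
rewrite sinB cos_norm sin_norm => sinB_ge0.
rewrite /tan -(ler_pM2r cosg_gt0) mulrAC divfK ?gt_eqF ?cosg_gt0 //; lra.
Qed.

Lemma cone_Im_le (z : R[i]) : z = 0 \/ parg_abs_le z g -> `|cIm z| <= tan g * cRe z.
Proof.
case=> [->|[th [_ _ th_le ->]]]; first by rewrite /= normr0 mulr0.
rewrite /= normrM ger0_norm ?sqrtr_ge0 // mulrCA ler_wpM2l ?sqrtr_ge0 //.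
exact: sin_abs_le.
Qed.

Lemma parg_abs_le1 : parg_abs_le (1 : R[i]) g.
Proof.
have pi0 := pi_gt0 R; case/andP: g_bounds => g0 _.
exists 0; split; [lra | lra | by rewrite normr0 ltW |].
have -> : modc (1 : R[i]) = 1 by rewrite /modc /= expr1n expr0n /= addr0 sqrtr1.
by rewrite cos0 sin0 mulr1 mulr0.
Qed.

Lemma parg_abs_le_cplus_cminus : parg_abs_le (cplus g) g /\ parg_abs_le (cminus g) g.
Proof.
have pi0 := pi_gt0 R; have cg := cosg_gt0; case/andP: g_bounds => g0 gpi.
(* both points have modulus 1 / (2 cos g) and argument +-g *)
pose K := (2 * cos g)^-1.
have K_gt0 : 0 < K by rewrite invr_gt0; lra.
have modK s : s ^+ 2 = (tan g / 2) ^+ 2 -> modc ((1 / 2) +i* s)%C = K.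
  move=> s2; rewrite /modc /= s2.
  have -> : (1 / 2) ^+ 2 + (tan g / 2) ^+ 2 = K ^+ 2.
    apply/eqP; rewrite -subr_eq0.
    rewrite (_ : _ - _ = (cos g ^+ 2 + sin g ^+ 2 - 1) / (4 * cos g ^+ 2)).
      by rewrite cos2Dsin2 subrr mul0r.
    by rewrite /K /tan; field; rewrite gt_eqF.
  by rewrite sqrtr_sqr gtr0_norm.
have Kcos : K * cos g = 1 / 2 by rewrite /K; field; rewrite gt_eqF.
have Ksin : K * sin g = tan g / 2 by rewrite /K /tan; field; rewrite gt_eqF.
split.
  exists g; split; [lra | lra | by rewrite gtr0_norm |].
  by rewrite /cplus modK // Kcos Ksin.
exists (- g); split; [lra | lra | by rewrite normrN gtr0_norm |].
by rewrite /cminus modK ?sqrrN // cosN sinN mulrN Kcos Ksin.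
Qed.

Lemma strat_ebasis p (k : 'I_p) : strat g (ebasis k).
Proof.
split; last first.
  rewrite (eq_bigr (fun j => 1 * ebasis k j 0)) => [|j _]; last by rewrite mul1r.
  exact: (sum_mul_ebasis (fun=> 1)).
by move=> j; rewrite ebasisE; case: eqP => _; [right; exact: parg_abs_le1 | left].
Qed.

Lemma strat_pair_pt p (k l : 'I_p) : k != l -> strat g (pair_pt g k l).
Proof.
move=> kl; have [cp_cone cm_cone] := parg_abs_le_cplus_cminus; split.
  move=> j; rewrite !mxE !eqxx !andbT.
  case: (eqVneq j k) => [-> | jk]; first by rewrite (negbTE kl) mulr1 mulr0 addr0; right.
  by case: (eqVneq j l) => _; rewrite !mulr0 ?mulr1 ?add0r; [right | left].
rewrite (eq_bigr (fun j => 1 * pair_pt g k l j 0)) => [|j _]; last by rewrite mul1r.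
by rewrite (sum_mul_pair_pt g (fun=> 1)) !mul1r cplus_cminus.
Qed.

Lemma strat_bound p (f : 'I_p -> R[i]) (v : R) :
  (forall d, extreme_pt g d -> cRe (\sum_k f k * d k 0) <= v) ->
  forall w, strat g w -> cRe (\sum_k f k * w k 0) <= v.
Proof.
move=> f_ext w [w_cone w_sum].
have f_ebasis k : cRe (f k) <= v.
  by rewrite -(sum_mul_ebasis f k); apply: f_ext; left; exists k.
have f_pair k l : k != l ->
    (cRe (f k) + cRe (f l)) / 2 + tan g / 2 * (cIm (f l) - cIm (f k)) <= v.
  move=> kl; have := f_ext _ (or_intror (ex_intro _ k (ex_intro _ l (conj kl erefl)))).
  by rewrite sum_mul_pair_pt raddfD /= !ReM /=; lra.
have Re_sum : \sum_k cRe (w k 0) = 1 by rewrite -raddf_sum w_sum.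
have Im_sum : \sum_k cIm (w k 0) = 0 by rewrite -raddf_sum w_sum.
rewrite -subr_le0.
have -> : cRe (\sum_k f k * w k 0) - v =
    \sum_k (cRe (w k 0) * (cRe (f k) - v) - cIm (w k 0) * cIm (f k)).
  rewrite raddf_sum -[X in _ - X]mulr1 -Re_sum mulr_sumr -sumrB.
  by apply: eq_bigr => k _ /=; rewrite ReM; ring.
apply: (pairwise_sum_le0 (b := tan g / 2)) => //.
- by rewrite divr_gt0 ?tang_gt0.
- by move=> k; rewrite subr_le0.
- by move=> k l kl; have := f_pair l k; rewrite eq_sym kl => /(_ isT); lra.
- by move=> k; rewrite (_ : 2 * (tan g / 2) = tan g); [exact: cone_Im_le | field].
Qed.

End StrategyCone.

Lemma payoffE m n (A : 'M[R[i]]_(m, n)) z w :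
  payoff A z w = cRe (\sum_i ((A *m w) i 0)^* * z i 0).
Proof.
rewrite /payoff /bil -mulmxA mxE !raddf_sum; apply: eq_bigr => i _ /=.
by rewrite !mxE Re_conjMC.
Qed.

Lemma bil_ebasis m n (A : 'M[R[i]]_(m, n)) i w : bil A (ebasis i) w = (A *m w) i 0.
Proof.
rewrite /bil -mulmxA mxE -[RHS](sum_mul_ebasis (fun j => (A *m w) j 0) i).
by apply: eq_bigr => j _; rewrite !mxE eqxx andbT; case: eqP; rewrite ?conjC1 ?conjC0 mulrC.
Qed.

Lemma payoff_ebasis m n (A : 'M[R[i]]_(m, n)) i w :
  payoff A (ebasis i) w = cRe ((A *m w) i 0).
Proof. by rewrite /payoff bil_ebasis. Qed.

Lemma payoff_pair_pt m n (A : 'M[R[i]]_(m, n)) (g : R) k l w :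
  payoff A (pair_pt g k l) w =
   (cRe ((A *m w) k 0) + cRe ((A *m w) l 0)) / 2
   + tan g / 2 * (cIm ((A *m w) k 0) - cIm ((A *m w) l 0)).
Proof.
rewrite payoffE sum_mul_pair_pt /cplus /cminus.
by case: ((A *m w) k 0) => a b; case: ((A *m w) l 0) => c d /=; ring.
Qed.

Lemma row_dominance_strat m n (A : 'M[R[i]]_(m, n)) (g : R) i0 i1 :
  0 < g < pi / 2 ->
  (forall d, extreme_pt g d -> payoff A (ebasis i0) d <= payoff A (ebasis i1) d) ->
  forall w, strat g w -> cRe ((A *m w) i0 0) <= cRe ((A *m w) i1 0).
Proof.
move=> hg dom w w_strat; rewrite -subr_le0 -raddfB !mxE -sumrB.
under eq_bigr do rewrite -mulrBl.
apply: strat_bound w_strat => // d d_ext.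
rewrite (eq_bigr _ (fun k _ => mulrBl _ _ _)) sumrB raddfB /= subr_le0.
by have := dom d d_ext; rewrite !payoff_ebasis !mxE.
Qed.

Section EliminatedRow.
Variables (m n : nat) (A : 'M[R[i]]_(m, n)) (g : R) (w : 'cV[R[i]]_n) (i0 i1 : 'I_m).
Hypotheses (g_bounds : 0 < g < pi / 2) (i1_i0 : i1 != i0).

Lemma extreme_pt_dominated_avoiding :
  cRe ((A *m w) i0 0) <= cRe ((A *m w) i1 0) ->
  cIm ((A *m w) i0 0) = cIm ((A *m w) i1 0) ->
  forall d, extreme_pt g d ->
  exists2 d', strat g d' /\ d' i0 0 = 0 & payoff A d w <= payoff A d' w.
Proof.
move=> Re_le Im_eq.
have e_avoids j : j != i0 -> strat g (ebasis j) /\ ebasis j i0 0 = 0 :> R[i].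
  by move=> ji0; rewrite ebasisE eq_sym (negbTE ji0); split; first exact: strat_ebasis.
have pair_avoids k l : k != l -> k != i0 -> l != i0 ->
    strat g (pair_pt g k l) /\ pair_pt g k l i0 0 = 0.
  move=> kl ki0 li0; split; first exact: strat_pair_pt.
  by rewrite !mxE !eqxx !andbT eq_sym (negbTE ki0) eq_sym (negbTE li0) !mulr0 addr0.
move=> d; case=> [[j ->] | [k [l [kl ->]]]].
  case: (eqVneq j i0) => [-> | ji0]; last by exists (ebasis j); [exact: e_avoids |].
  by exists (ebasis i1); [exact: e_avoids | rewrite !payoff_ebasis].
have [i0_k | ki0] := eqVneq i0 k; last have [i0_l | li0] := eqVneq i0 l.
- subst k; have li0 : l != i0 by rewrite eq_sym.
  case: (eqVneq l i1) => [l_i1 | li1].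
    exists (ebasis i1); first exact: e_avoids.
    by rewrite payoff_pair_pt payoff_ebasis l_i1 Im_eq; lra.
  exists (pair_pt g i1 l); first by apply: pair_avoids; rewrite // eq_sym.
  by rewrite !payoff_pair_pt Im_eq; lra.
- subst l; case: (eqVneq k i1) => [k_i1 | ki1].
    exists (ebasis i1); first exact: e_avoids.
    by rewrite payoff_pair_pt payoff_ebasis k_i1 Im_eq; lra.
  exists (pair_pt g k i1); first exact: pair_avoids.
  by rewrite !payoff_pair_pt Im_eq; lra.
- by exists (pair_pt g k l); first by apply: pair_avoids; rewrite // eq_sym.
Qed.

Lemma best_response_avoiding (v : R) :
  cRe ((A *m w) i0 0) <= cRe ((A *m w) i1 0) ->
  cIm ((A *m w) i0 0) = cIm ((A *m w) i1 0) ->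
  (forall z, strat g z -> z i0 0 = 0 -> payoff A z w <= v) ->
  forall z, strat g z -> payoff A z w <= v.
Proof.
move=> Re_le Im_eq avoid_le z z_strat; rewrite payoffE.
apply: strat_bound z_strat => // d d_ext.
have [d' [d'_strat d'_i0] d_le] := extreme_pt_dominated_avoiding Re_le Im_eq d_ext.
by rewrite -payoffE (le_trans d_le) ?avoid_le.
Qed.

End EliminatedRow.

Lemma payoff_row' m n (i0 : 'I_m.+1) (A : 'M[R[i]]_(m.+1, n)) z w :
  payoff (row' i0 A) z w = payoff A (ins0 i0 z) w.
Proof.
rewrite !payoffE (bigD1_ord i0) //= !mxE unlift_none mulr0 add0r.
congr cRe; apply: eq_bigr => k _; rewrite !mxE liftK; congr (_^* * _).
by apply: eq_bigr => j _; rewrite !mxE.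
Qed.

Lemma strat_ins0 m (i0 : 'I_m.+1) (g : R) z : strat g z -> strat g (ins0 i0 z).
Proof.
case=> z_cone z_sum; split.
  by move=> i; rewrite mxE; case: (unlift i0 i) => [k |]; [exact: z_cone | left].
rewrite (bigD1_ord i0) //= mxE unlift_none add0r -z_sum.
by apply: eq_bigr => k _; rewrite mxE liftK.
Qed.

Lemma ins0_row' m (i0 : 'I_m.+1) (z : 'cV[R[i]]_m.+1) : z i0 0 = 0 -> ins0 i0 (row' i0 z) = z.
Proof.
move=> z_i0; apply/matrixP => i j; rewrite (ord1 j) !mxE.
by case: unliftP => [k -> | ->]; rewrite ?mxE.
Qed.

Lemma strat_row' m (i0 : 'I_m.+1) (g : R) (z : 'cV[R[i]]_m.+1) :
  z i0 0 = 0 -> strat g z -> strat g (row' i0 z).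
Proof.
move=> z_i0 [z_cone z_sum]; split; first by move=> k; rewrite mxE; exact: z_cone.
by rewrite -z_sum (bigD1_ord i0) //= z_i0 add0r; apply: eq_bigr => k _; rewrite mxE.
Qed.

End ComplexGameTheory.

Theorem theorem6p9 (R : realType) (m' n : nat) (A : 'M[R[i]]_(m'.+1, n))
    (alpha0 beta0 : R) (i0 i1 : 'I_m'.+1)
    (z0 : 'cV[R[i]]_m') (w0 : 'cV[R[i]]_n) :
  (1 < m'.+1)%N ->
  0 < alpha0 < pi / 2 ->
  0 < beta0 < pi / 2 ->
  i1 != i0 ->
  (forall d, extreme_pt beta0 d -> payoff A (ebasis i0) d <= payoff A (ebasis i1) d) ->
  (exists2 d0, extreme_pt beta0 d0 & payoff A (ebasis i0) d0 < payoff A (ebasis i1) d0) ->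
  complex_NE alpha0 beta0 (row' i0 A) z0 w0 ->
  complex.Im (bil A (ebasis i0) w0) = complex.Im (bil A (ebasis i1) w0) ->
  complex_NE alpha0 beta0 A (ins0 i0 z0) w0 /\
  payoff (row' i0 A) z0 w0 = payoff A (ins0 i0 z0) w0.
Proof.
move=> _ h_alpha h_beta i1_i0 dom _ [z0_strat w0_strat z0_best w0_best] Im_eq.
split; last exact: payoff_row'.
rewrite !bil_ebasis in Im_eq.
have Re_le := row_dominance_strat h_beta dom w0_strat.
split=> //; first exact: strat_ins0.
- apply: (best_response_avoiding h_alpha i1_i0 Re_le Im_eq) => z z_strat z_i0.
  rewrite -(ins0_row' z_i0) -!payoff_row'; apply: z0_best; exact: strat_row'.
- by move=> w w_strat; rewrite -!payoff_row'; apply: w0_best.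
Qed.
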